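(* Let $S$ be a random $*$-tree on a $*$-tree $B\subseteq\mathbb{A}^*$ with bounded offspring distributions $\{M_x\}_{x\in B}$. Let $\mathscr{A}$ assign to each $x\in B'$ a nonempty monotonic collection $\mathscr{A}_x$ of subsets of $W_{B'}(x)$. Define $g_{\mathscr{A}}:[0,1]\to[0,1]$ by $g_{\mathscr{A}}(s)=\sup_{x\in B'}\mathbb{P}(M_x^{(s)}\notin\mathscr{A}_x)$, and let $s_0$ be the smallest fixed point of $g_{\mathscr{A}}$ in $[0,1]$. Then $\sup_{x\in B'}\mathbb{P}\big(S^x\text{ has no }\mathscr{A}^x\text{-}*\text{-subtree}\ \big|\ x\in S\big)\le s_0.$
   Context: $\mathbb{A}$ is a finite alphabet, $\mathbb{A}^*$ the finite words (with empty word $\emptyset$); $j<i$ means $j$ is a proper prefix of $i$. For $S\subseteq\mathbb{A}^*$ and $i\in S$, the height is $h_S(i)=|\{j\in S:j<i\}|$. A $*$-tree is $S\subseteq\mathbb{A}^*$ with $\emptyset\in S$, such that every $\emptyset\ne i\in S$ has a unique $j\in S$ with $j<i$ and $h_S(j)=h_S(i)-1$, and each $S_n=h_S^{-1}(n)$ is finite. For $i\in S$: $W_S(i)=\{j\in\mathbb{A}^*: ij\in S_{h_S(i)+1}\}$ and $S^i=\{j:ij\in S\}$. A $*$-subtree of $S$ is a $*$-tree $Q\subseteq S$ such that for every $i\in Q$, $\{j\in S:j<i\}\subseteq Q$. Random $*$-tree on a $*$-tree $B$: given independent random variables $M_x$ ($x\in B$) with $M_x\subseteq W_B(x)$, set $S_0=\{\emptyset\}$,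 $S_n=\bigcup_{i\in S_{n-1}}\{ij:j\in M_i\}$, $S=\bigcup_nS_n$. $B'=\{i\in B:\mathbb{P}(i\in S)>0\}$. The offspring distributions are bounded if there is $C>0$ with $\mathbb{P}(|M_x|<C)=1$ for all $x\in B'$. For a map $x\mapsto\mathscr{A}_x$, a $*$-tree $Q$ is an $\mathscr{A}$-$*$-tree if $W_Q(i)\in\mathscr{A}_i$ for all $i\in Q$; $\mathscr{A}^x$ is the map $i\mapsto\mathscr{A}_{xi}$. $\mathscr{A}_x$ is monotonic if $X\in\mathscr{A}_x$ and $X\subseteq Y\subseteq W_{B'}(x)$ imply $Y\in\mathscr{A}_x$. $M_x^{(s)}=M_x\cap Y$ with $Y$ independent of $M_x$, $\mathbb{P}(Y=D)=(1-s)^{|D|}s^{|W_B(x)\setminus D|}$ for $D\subseteq W_B(x)$. *)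

From HB Require Import structures.
From mathcomp Require Import all_boot all_order all_algebra.
From mathcomp Require Import finmap.
From mathcomp Require Import all_classical all_reals all_analysis.

Set Implicit Arguments.
Unset Strict Implicit.
Unset Printing Implicit Defensive.

Import Order.TTheory GRing.Theory Num.Theory.
Local Open Scope classical_set_scope.
Local Open Scope ring_scope.

Section Words.
Variable A : finType.
Notation word := (seq A).

Definition pprefix (j i : word) : bool := prefix j i && (size j < size i)%N.

(** height h_S(i) = |{ j in S : j < i }| (always a finite set). *)
Definition fcard (T : choiceType) (X : set T) : nat := size (enum_fset (fset_set X)).

Definition height (S : set word) (i : word) : nat :=
  fcard [set j | S j /\ pprefix j i].

Definition level (S : set word) (n : nat) : set word :=
  [set i | S i /\ height S i = n].

Definition star_tree (S : set word) : Prop :=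
  S [::] /\
  (forall i, S i -> i <> [::] ->
     exists! j, S j /\ pprefix j i /\ (height S j).+1 = height S i) /\
  (forall n, finite_set (level S n)).

Definition Wset (S : set word) (i : word) : set word :=
  [set j | level S (height S i).+1 (i ++ j)].

Definition shift (S : set word) (i : word) : set word := [set j | S (i ++ j)].

Definition star_subtree (Q T : set word) : Prop :=
  star_tree Q /\ Q `<=` T /\
  (forall i, Q i -> forall j, T j -> pprefix j i -> Q j).

Definition is_A_tree (Acoll : word -> set (set word)) (Q : set word) : Prop :=
  star_tree Q /\ (forall i, Q i -> Acoll i (Wset Q i)).

Definition Ashift (Acoll : word -> set (set word)) (x : word) :
  word -> set (set word) := fun i => Acoll (x ++ i).

Definition monotonic (Ax : set (set word)) (W : set word) : Prop :=
  forall X Y, Ax X -> X `<=` Y -> Y `<=` W -> Ax Y.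

(** The random *-tree generated by offspring sets M (pointwise in ω). *)
Fixpoint rlevel (Omega : Type) (M : word -> Omega -> set word)
    (w : Omega) (n : nat) : set word :=
  match n with
  | 0 => [set [::]]
  | n'.+1 => [set v | exists i j, rlevel M w n' i /\ M i w j /\ v = i ++ j]
  end.

Definition rtree (Omega : Type) (M : word -> Omega -> set word) (w : Omega) :
  set word := \bigcup_(n in setT) rlevel M w n.

End Words.

Section Prob.
Variables (A : finType) (R : realType) (d : measure_display)
  (Omega : measurableType d) (P : probability Omega R).
Notation word := (seq A).

(** Each M_x is a (discrete) random variable: its atoms are events. *)
Definition offspring_measurable (B : set word) (M : word -> Omega -> set word)
  : Prop :=
  forall x, B x -> forall D : set word, measurable [set w | M x w = D].

(** Mutual independence of the discrete family {M_x}_{x in B}: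
    product rule over every finite family of distinct indices. *)
Definition offspring_independent (B : set word) (M : word -> Omega -> set word)
  : Prop :=
  forall (s : seq word) (D : word -> set word),
    uniq s -> (forall x, x \in s -> B x) ->
    fine (P (\big[setI/setT]_(x <- s) [set w | M x w = D x])) =
    \prod_(x <- s) fine (P [set w | M x w = D x]).

Definition Bprime (B : set word) (M : word -> Omega -> set word) : set word :=
  [set i | B i /\ (0 < P [set w | rtree M w i])%E].

Definition bounded_offspring (B : set word) (M : word -> Omega -> set word)
  : Prop :=
  exists C : R, 0 < C /\
    forall x, Bprime B M x ->
      P [set w | (fcard (M x w))%:R < C] = 1%E.

(** P(M_x^{(s)} notin 𝒜_x), where M_x^{(s)} = M_x ∩ Y with Y independent of
    M_x and P(Y = E) = (1-s)^{|E|} s^{|W_B(x) \ E|} for E ⊆ W_B(x):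
    by independence this is
      Σ_{D ⊆ W} Σ_{E ⊆ W} P(M_x = D) P(Y = E) 1[D ∩ E ∉ 𝒜_x]. *)
Definition thinned_miss_prob (B : set word) (M : word -> Omega -> set word)
    (Acoll : word -> set (set word)) (x : word) (s : R) : R :=
  let W := Wset B x in
  (\sum_(D \in [set D | D `<=` W])
    \sum_(E \in [set E | E `<=` W])
      fine (P [set w | M x w = D]) *
      ((1 - s) ^+ fcard E * s ^+ fcard (W `\` E)) *
      \1_(~` Acoll x) (D `&` E))%R.

Definition gA (B : set word) (M : word -> Omega -> set word)
    (Acoll : word -> set (set word)) (s : R) : R :=
  sup [set thinned_miss_prob B M Acoll x s | x in Bprime B M].

Definition no_subtree_event (M : word -> Omega -> set word)
    (Acoll : word -> set (set word)) (x : word) : set Omega :=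
  [set w | ~ exists Q, star_subtree Q (shift (rtree M w) x) /\
                       is_A_tree (Ashift Acoll x) Q].

Definition cond_no_subtree (M : word -> Omega -> set word)
    (Acoll : word -> set (set word)) (x : word) : R :=
  fine (P (no_subtree_event M Acoll x `&` [set w | rtree M w x])) /
  fine (P [set w | rtree M w x]).

End Prob.

(* For y in B let G_n(y) be the event that the random tree contains, below y,
   the first n generations of an A^y-*-subtree.  Offspring sets are finite, so
   by a Koenig-type argument S^x has an A^x-*-subtree iff G_n(x) holds for all n.
   G_n(y) only depends on the offspring sets of the n generations below y, hence
   given M_y = D the events G_(n-1)(yj), j in D, are independent of each other,
   of M_y and of the event {y in S}.  By induction on n, P(not G_n(y)) <= s0 for
   y in B': given M_y = D every child is good with probability at least 1 - s0,
   so by monotonicity of A_y the failure probability is at most the probability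
   that D, thinned with retention probability 1 - s0, is not in A_y; averaging
   over D gives at most g(s0) = s0.  Letting n grow bounds the conditional
   probability. *)

From Pilot Require Import Defs.
From HB Require Import structures.
From mathcomp Require Import all_boot all_order all_algebra.
From mathcomp Require Import finmap.
From mathcomp Require Import all_classical all_reals all_analysis.
From mathcomp Require Import ring lra.
Import Order.TTheory GRing.Theory Num.Theory.
Local Open Scope classical_set_scope.

Set Implicit Arguments.
Unset Strict Implicit.
Unset Printing Implicit Defensive.

(* [fcard] and [shift] are also exported by finmap and the analysis library. *)
Local Notation fcard := Defs.fcard.
Local Notation shift := Defs.shift.

Section FiniteCard.
Variable T : choiceType.
Implicit Types X Y : set T.

Lemma fcardE X : fcard X = #|` fset_set X|.
Proof. by []. Qed.

Lemma fcard0 : fcard (set0 : set T) = 0%N.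
Proof. by rewrite fcardE fset_set0 cardfs0. Qed.

Lemma fcardU1 X z : finite_set X -> ~ X z -> fcard (z |` X) = (fcard X).+1.
Proof.
move=> fX nXz; rewrite !fcardE fset_setU1 // cardfsU1.
by rewrite in_fset_set // memNset.
Qed.

Lemma fcardU_disj X Y : finite_set X -> finite_set Y -> X `&` Y = set0 ->
  fcard (X `|` Y) = (fcard X + fcard Y)%N.
Proof.
move=> fX fY XY; rewrite !fcardE fset_setU // -cardfsUI.
by rewrite -fset_setI // XY fset_set0 cardfs0 addn0.
Qed.

Lemma fcard_eq0 X : finite_set X -> fcard X = 0%N -> X = set0.
Proof.
move=> fX; rewrite fcardE => /eqP; rewrite cardfs_eq0 => /eqP.
exact: fset_set_set0.
Qed.

End FiniteCard.

Section ProperPrefix.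
Variable A : finType.
Implicit Types a b c j : seq A.

Lemma pprefixW a b : pprefix a b -> prefix a b.
Proof. by case/andP. Qed.

Lemma pprefix_size a b : pprefix a b -> (size a < size b)%N.
Proof. by case/andP. Qed.

Lemma pprefix_irr a : ~ pprefix a a.
Proof. by move/pprefix_size; rewrite ltnn. Qed.

Lemma pprefix_nil a : ~ pprefix a [::].
Proof. by move/pprefix_size. Qed.

Lemma prefix_total a b c : prefix a c -> prefix b c -> prefix a b \/ prefix b a.
Proof.
rewrite !prefixE => /eqP ha /eqP hb.
case: (leqP (size a) (size b)) => h; [left|right]; apply/eqP.
  by rewrite -[in RHS]ha -hb take_takel.
by rewrite -[in RHS]hb -ha take_takel ?(ltnW h).
Qed.

Lemma prefix_size_eq a b : prefix a b -> size a = size b -> a = b.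
Proof. by rewrite prefixE => /eqP ha hs; rewrite -ha hs take_size. Qed.

Lemma pprefix_trans b a c : pprefix a b -> pprefix b c -> pprefix a c.
Proof.
move=> /andP[p1 s1] /andP[p2 s2]; apply/andP; split.
  exact: prefix_trans p2.
exact: ltn_trans s2.
Qed.

Lemma pprefix_trichotomy k a b : pprefix k b -> pprefix a b ->
  [\/ pprefix k a, k = a | pprefix a k].
Proof.
move=> /andP[pk _] /andP[pa _].
case: (prefix_total pk pa) => h.
  case: (ltngtP (size k) (size a)) => hs.
  - by apply: Or31; apply/andP.
  - by move: (size_prefix h); rewrite leqNgt hs.
  - by apply: Or32; apply: prefix_size_eq.
case: (ltngtP (size a) (size k)) => hs.
- by apply: Or33; apply/andP.
- by move: (size_prefix h); rewrite leqNgt hs.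
- by apply: Or32; symmetry; apply: prefix_size_eq.
Qed.

Lemma pprefix_cat a j : j <> [::] -> pprefix a (a ++ j).
Proof.
move=> hj; apply/andP; split; first exact: prefix_prefix.
by rewrite size_cat -{1}(addn0 (size a)) ltn_add2l lt0n size_eq0; apply/eqP.
Qed.

Lemma pprefix_cat2 x a b : pprefix (x ++ a) (x ++ b) = pprefix a b.
Proof. by rewrite /pprefix !size_cat ltn_add2l prefix_catr // eqxx. Qed.

Lemma catIl x a b : x ++ a = x ++ b -> a = b.
Proof. by elim: x => // z x IH /= [] /IH. Qed.

Lemma finite_pprefix b : finite_set [set k | pprefix k b].
Proof.
apply: (@sub_finite_set _ _ [set` [seq take n b | n <- iota 0 (size b)]]) => //.
move=> k /andP[pk sk] /=; apply/mapP; exists (size k).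
  by rewrite mem_iota add0n.
by move: pk; rewrite prefixE => /eqP.
Qed.

End ProperPrefix.

Section Heights.
Variable A : finType.
Notation word := (seq A).
Implicit Types (a b i j k x y : word) (T : set word).

Definition ancestors T b := [set k | T k /\ pprefix k b].

Definition between T a b := [set k | T k /\ pprefix a k /\ pprefix k b].

Definition is_child T a b := [/\ T a, T b, pprefix a b &
  forall k, T k -> pprefix a k -> pprefix k b -> False].

Lemma finite_ancestors T b : finite_set (ancestors T b).
Proof. by apply: sub_finite_set (finite_pprefix b) => k []. Qed.

Lemma heightE T b : height T b = fcard (ancestors T b).
Proof. by []. Qed.

Lemma height_nil T : height T [::] = 0%N.
Proof.
rewrite heightE.
suff -> : ancestors T [::] = set0 by rewrite fcard0.
by apply/seteqP; split => // k [_ /pprefix_nil].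
Qed.

Lemma height_between T a b : T a -> pprefix a b ->
  height T b = ((height T a).+1 + fcard (between T a b))%N.
Proof.
move=> Ta ab.
have E : ancestors T b = (a |` ancestors T a) `|` between T a b.
  apply/seteqP; split => k.
    move=> [Tk kb]; case: (pprefix_trichotomy kb ab) => h.
    - by left; right.
    - by left; left.
    - by right.
  by case=> [[->|[Tk ka]]|[Tk [ak kb]]] //; split => //; exact: pprefix_trans ab.
have fM : finite_set (between T a b).
  by apply: sub_finite_set (finite_ancestors T b) => k [? [? ?]].
rewrite heightE E fcardU_disj //.
- by rewrite fcardU1 //; [exact: finite_ancestors|move=> [_ /pprefix_irr]].
- by rewrite finite_setU; split => //; exact: finite_ancestors.
- apply/seteqP; split => // k [[->|[_ ka]] [_ [ak _]]].
    exact: pprefix_irr ak.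
  by apply: (@pprefix_irr _ k); exact: pprefix_trans ak.
Qed.

Lemma height_lt T a b : T a -> pprefix a b -> (height T a < height T b)%N.
Proof. by move=> Ta ab; rewrite (height_between Ta ab) leq_addr. Qed.

Lemma is_child_height T a b : is_child T a b -> height T b = (height T a).+1.
Proof.
case=> Ta Tb ab hk; rewrite (height_between Ta ab).
suff -> : between T a b = set0 by rewrite fcard0 addn0.
by apply/seteqP; split => // k [Tk [ak kb]]; exact: hk Tk ak kb.
Qed.

Lemma height_is_child T a b : T a -> T b -> pprefix a b ->
  height T b = (height T a).+1 -> is_child T a b.
Proof.
move=> Ta Tb ab; rewrite (height_between Ta ab) => /eqP.
rewrite -{2}(addn0 (height T a).+1) eqn_add2l => /eqP h0.
have fM : finite_set (between T a b).
  by apply: sub_finite_set (finite_ancestors T b) => k [? [? ?]].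
have hM := fcard_eq0 fM h0.
split => // k Tk ak kb.
by have : between T a b k by []; rewrite hM.
Qed.

Lemma is_child_uniq T a a' b : is_child T a b -> is_child T a' b -> a = a'.
Proof.
case=> Ta _ ab h1 [Ta' _ a'b h2].
case: (pprefix_trichotomy ab a'b) => // h.
- by case: (h1 a' Ta' h a'b).
- by case: (h2 a Ta h ab).
Qed.

Lemma is_child_sub T T' a b : T' `<=` T -> T' a -> T' b -> is_child T a b ->
  is_child T' a b.
Proof. by move=> sub Ta Tb [_ _ ab h]; split => // k /sub; apply: h. Qed.

Lemma WsetP T a j : T a -> Wset T a j <-> is_child T a (a ++ j).
Proof.
move=> Ta; split.
  move=> [Taj hj]; apply: height_is_child => //; apply: pprefix_cat => ej.
  by move: hj; rewrite ej cats0 => /eqP; rewrite -[X in X == _]addn0 -addn1 eqn_add2l.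
by move=> ch; split; [case: ch|rewrite (is_child_height ch)].
Qed.

Lemma is_child_shift T x i i' :
  is_child (shift T x) i i' <-> is_child T (x ++ i) (x ++ i').
Proof.
split.
  case=> Ti Ti' ii' h; split => //; first by rewrite pprefix_cat2.
  move=> k Tk ak kb.
  have /prefixP[u ku] := prefix_trans (prefix_prefix x i) (pprefixW ak).
  by subst k; rewrite !pprefix_cat2 in ak kb; exact: (h u Tk ak kb).
case=> Ti Ti' ii' h; split => //; first by rewrite -(pprefix_cat2 x).
by move=> k Tk ak kb; apply: (h (x ++ k)) => //; rewrite pprefix_cat2.
Qed.

Lemma finite_Wset (B : set word) y : star_tree B -> finite_set (Wset B y).
Proof.
move=> [_ [_ fl]]; apply: (@finite_preimage _ _ _ (cat y)) => //.
by move=> a b _ _; exact: catIl.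
Qed.

End Heights.

Section RandomTree.
Variables (A : finType) (Omega : Type) (B : set (seq A))
  (M : seq A -> Omega -> set (seq A)).
Notation word := (seq A).
Hypothesis B_nil : B [::].
Hypothesis M_Wset : forall x, B x -> forall w, M x w `<=` Wset B x.
Implicit Types (a b i j k x y : word) (w : Omega).

Lemma rtreeP w y : rtree M w y <-> exists n, rlevel M w n y.
Proof. by split; [case=> n _ h; exists n|case=> n h; exists n]. Qed.

Lemma rlevel_height w n y : rlevel M w n y -> B y /\ height B y = n.
Proof.
elim: n y => [|n IH] y /=; first by move=> ->; rewrite height_nil.
case=> i [j [li [Mij ->]]].
have [Bi hi] := IH _ li.
by have [] := M_Wset Bi Mij; rewrite hi.
Qed.

Lemma rtree_sub w : rtree M w `<=` B.
Proof. by move=> y /rtreeP[n /rlevel_height[]]. Qed.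

Lemma rtree_nil w : rtree M w [::].
Proof. by apply/rtreeP; exists 0%N. Qed.

Lemma rtree_child w a j : rtree M w a -> M a w j -> rtree M w (a ++ j).
Proof. by case/rtreeP => n ha Mj; apply/rtreeP; exists n.+1, a, j. Qed.

Lemma rtree_is_childB w a j : rtree M w a -> M a w j -> is_child B a (a ++ j).
Proof.
move=> Sa Mj; have Ba := rtree_sub Sa.
by apply/WsetP => //; apply: M_Wset Mj.
Qed.

Lemma rtree_parent w b : rtree M w b -> b <> [::] ->
  exists a j, [/\ rtree M w a, M a w j & b = a ++ j].
Proof.
case/rtreeP => [[|n]] /=; first by move=> ->.
case=> a [j [la [Mj ->]]] _; exists a, j; split => //.
by apply/rtreeP; exists n.
Qed.

Lemma rtree_prefix_closed w b k : rtree M w b -> B k -> pprefix k b ->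
  rtree M w k.
Proof.
case/rtreeP => n; elim: n b => [|n IH] b /=; first by move=> -> _ /pprefix_nil.
case=> a [j [la [Mj ->]]] Bk kb.
have Sa : rtree M w a by apply/rtreeP; exists n.
have [_ _ ab hmid] := rtree_is_childB Sa Mj.
case: (pprefix_trichotomy kb ab) => h.
- exact: IH la Bk h.
- by rewrite h.
- by case: (hmid k Bk h kb).
Qed.

Lemma rtree_is_childE w a b : rtree M w a -> rtree M w b ->
  is_child (rtree M w) a b <-> is_child B a b.
Proof.
move=> Sa Sb; split; last by apply: is_child_sub => //; exact: rtree_sub.
case=> _ _ ab h; split => //; [exact: rtree_sub Sa|exact: rtree_sub Sb|].
by move=> k Bk ak kb; apply: (h k) => //; exact: rtree_prefix_closed kb.
Qed.

Lemma rtree_is_child w a j : rtree M w a -> M a w j ->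
  is_child (rtree M w) a (a ++ j).
Proof.
move=> Sa Mj; apply/rtree_is_childE => //; first exact: rtree_child.
exact: rtree_is_childB Mj.
Qed.

Lemma rtree_is_child_offspring w a b : is_child (rtree M w) a b ->
  exists2 j, b = a ++ j & M a w j.
Proof.
move=> ch; have [Sa Sb ab _] := ch.
have [|p [j [Sp Mj eb]]] := rtree_parent Sb.
  by move=> eb; move: ab; rewrite eb => /pprefix_nil.
have ch1 : is_child B a b by apply/(rtree_is_childE Sa Sb).
have ch2 : is_child B p b by rewrite eb; exact: rtree_is_childB Mj.
by have ap := is_child_uniq ch1 ch2; exists j; subst.
Qed.

End RandomTree.

Section PowerSeq.
Variable T : choiceType.

Fixpoint powerseq (s : seq T) : seq (set T) :=
  if s is z :: s' then powerseq s' ++ map (setU [set z]) (powerseq s')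
  else [:: set0].

Lemma mem_powerseq s K : K \in powerseq s <-> K `<=` [set` s].
Proof.
elim: s K => [|z s IH] K /=.
  rewrite mem_seq1; split => [/eqP -> //|Ks].
  by apply/eqP/seteqP; split => // k /Ks.
rewrite mem_cat; split.
  case/orP => [/IH Ks k /Ks /= ks|/mapP[E /IH Es ->] k].
    by rewrite in_cons ks orbT.
  by case=> [->|/Es /= ks]; rewrite /= in_cons ?eqxx // ks orbT.
move=> Ks; have KDs : K `\ z `<=` [set` s].
  by move=> k [/Ks /=]; rewrite in_cons => /orP[/eqP ->|].
case: (pselect (K z)) => Kz; apply/orP.
  by right; apply/mapP; exists (K `\ z); [exact/IH|rewrite setD1K].
by left; rewrite -(not_setD1 Kz); exact/IH.
Qed.

Lemma powerseq_uniq s : uniq s -> uniq (powerseq s).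
Proof.
elim: s => [//|z s IH] /= /andP[zs us].
have zNE E : E \in powerseq s -> ~ E z.
  by move=> /mem_powerseq Es /Es /= zin; rewrite zin in zs.
rewrite cat_uniq IH //=; apply/andP; split.
  by apply/hasPn => _ /mapP[E Es ->]; apply/negP => /zNE; apply; left.
rewrite map_inj_in_uniq ?IH // => E1 E2 /zNE n1 /zNE n2 e.
apply/seteqP; split => k Ek.
  have : (z |` E2) k by rewrite -e; right.
  by case=> // kz; case: n1; rewrite -kz.
have : (z |` E1) k by rewrite e; right.
by case=> // kz; case: n2; rewrite -kz.
Qed.

End PowerSeq.

Lemma antitone_witness_in_seq (X : eqType) (ks : seq X) (phi : nat -> X -> Prop) :
  (forall n K, phi n.+1 K -> phi n K) ->
  (forall n, exists2 K, K \in ks & phi n K) ->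
  exists2 K, K \in ks & forall n, phi n K.
Proof.
move=> anti hn.
have mono n m K : (n <= m)%N -> phi m K -> phi n K.
  move=> nm; rewrite -(subnK nm); elim: (m - n)%N => [//|k IH].
  by rewrite addSn => /anti.
apply: contrapT => hno.
have hK K : K \in ks -> exists n, ~ phi n K.
  move=> Kks; apply: contrapT => hall; apply: hno; exists K => // n.
  by apply: contrapT => hn'; apply: hall; exists n.
have [N hN] : exists N, forall K, K \in ks -> ~ phi N K.
  elim: ks hK {hn hno} => [|z ks IH] hK; first by exists 0%N.
  have [N1 h1] : exists N, forall K, K \in ks -> ~ phi N K.
    by apply: IH => K Kks; apply: hK; rewrite inE Kks orbT.
  have [n0 h0] := hK z (mem_head _ _).
  exists (maxn N1 n0) => K; rewrite inE => /orP[/eqP ->|Kks] h.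
    by apply: h0; apply: (mono _ (maxn N1 n0)) => //; exact: leq_maxr.
  by apply: (h1 K Kks); apply: (mono _ (maxn N1 n0)) => //; exact: leq_maxl.
have [K Kks hK'] := hn N.
exact: hN K Kks hK'.
Qed.

Section GoodEvents.
Variables (A : finType) (Omega : Type) (M : seq A -> Omega -> set (seq A))
  (Acoll : seq A -> set (set (seq A))).
Notation word := (seq A).
Implicit Types (i j k x y : word) (w : Omega).

(* [good_to_depth n y] is the event that the first [n] generations of an
   [Ashift Acoll y]-*-subtree can be found in [shift (rtree M w) y]. *)
Fixpoint good_to_depth n y : set Omega :=
  if n is n'.+1 then
    [set w | exists K, [/\ K `<=` M y w, Acoll y K &
                           forall j, K j -> good_to_depth n' (y ++ j) w]]
  else setT.

Lemma good_to_depthS n y : good_to_depth n.+1 y `<=` good_to_depth n y.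
Proof.
elim: n y => [//|n IH] y w /= [K [KM AK HK]].
by exists K; split => // j /HK /IH.
Qed.

Lemma good_to_depth_le n m y : (n <= m)%N ->
  good_to_depth m y `<=` good_to_depth n y.
Proof.
move=> nm; rewrite -(subnK nm); elim: (m - n)%N => [//|k IH] w h.
by apply: IH; apply: good_to_depthS; rewrite -addSn.
Qed.

Variable B : set word.
Hypothesis sB : star_tree B.
Hypothesis M_Wset : forall x, B x -> forall w, M x w `<=` Wset B x.

Let B_nil : B [::] := sB.1.

Lemma finite_offspring w y : B y -> finite_set (M y w).
Proof. by move=> By; apply: sub_finite_set (finite_Wset y sB); exact: M_Wset. Qed.

Lemma subtree_good w x Q : rtree M w x ->
  star_subtree Q (shift (rtree M w) x) -> is_A_tree (Ashift Acoll x) Q ->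
  forall n, good_to_depth n x w.
Proof.
move=> Sx [_ [QS Qcl]] [tQ AQ] n.
have up a b : is_child Q a b -> is_child (shift (rtree M w) x) a b.
  case=> Qa Qb ab h; split; [exact: QS|exact: QS|by []|].
  by move=> k Sk ak kb; apply: (h k) => //; exact: Qcl Qb _ Sk kb.
suff H i : Q i -> good_to_depth n (x ++ i) w by rewrite -[x]cats0; apply/H/tQ.1.
elim: n i => [//|n IH] i Qi /=.
exists (Wset Q i); split; last 2 first.
- exact: AQ.
- by move=> j /(WsetP _ Qi) [_ Qij _ _]; rewrite -catA; apply: IH.
move=> j /(WsetP _ Qi) /up /is_child_shift /(rtree_is_child_offspring B_nil M_Wset).
by case=> j'; rewrite catA => /catIl ->.
Qed.

Section KoenigConstruction.
Variables (w : Omega) (x : word).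
Hypothesis Sx : rtree M w x.

Definition always_good y := forall n, good_to_depth n y w.

Definition good_choice y K :=
  [/\ K `<=` M y w, Acoll y K & forall j, K j -> always_good (y ++ j)].

(* König's lemma: since [M y w] is finite, one offspring set works for all depths. *)
Lemma exists_good_choice y : rtree M w y -> always_good y -> exists K, good_choice y K.
Proof.
move=> Sy Gy.
have [ms ems] := (finite_seqP _).1 (finite_offspring w (rtree_sub B_nil M_Wset Sy)).
pose phi n K := [/\ K `<=` M y w, Acoll y K &
                    forall j, K j -> good_to_depth n (y ++ j) w].
have [n K [h1 h2 h3]|n|K _ hK] := @antitone_witness_in_seq _ (powerseq ms) phi.
- by split => // j /h3 /good_to_depthS.
- have [K [KM AK HK]] := Gy n.+1.
  by exists K => //; apply/mem_powerseq; rewrite -ems.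
- have [KM AK _] := hK 0%N.
  by exists K; split => // j Kj n; have [_ _] := hK n; apply.
Qed.

Definition pick_choice y : set word :=
  if pselect (exists K, good_choice y K) is left e then proj1_sig (cid e)
  else set0.

Lemma pick_choiceP y : (exists K, good_choice y K) -> good_choice y (pick_choice y).
Proof. by rewrite /pick_choice; case: pselect => // e _; exact: proj2_sig (cid e). Qed.

Fixpoint picked_level n : set word :=
  if n is n'.+1 then
    [set v | exists i j, [/\ picked_level n' i, pick_choice (x ++ i) j & v = i ++ j]]
  else [set [::]].

Definition picked_tree : set word := [set i | exists n, picked_level n i].

Hypothesis Gx : always_good x.

Lemma picked_tree_good i : picked_tree i -> rtree M w (x ++ i) /\ always_good (x ++ i).
Proof.
case=> n; elim: n i => [|n IH] i /=; first by move=> ->; rewrite cats0.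
case=> i' [j [li Kj ->]].
have [Si Gi] := IH _ li.
have [KM _ KG] := pick_choiceP (exists_good_choice Si Gi).
by rewrite catA; split; [apply: rtree_child Si (KM _ Kj)|apply: KG].
Qed.

Lemma picked_choiceP i : picked_tree i -> good_choice (x ++ i) (pick_choice (x ++ i)).
Proof. by move=> /picked_tree_good [Si Gi]; exact/pick_choiceP/exists_good_choice. Qed.

Lemma picked_tree_sub : picked_tree `<=` shift (rtree M w) x.
Proof. by move=> i /picked_tree_good []. Qed.

Lemma picked_tree_step i j : picked_tree i -> pick_choice (x ++ i) j ->
  picked_tree (i ++ j).
Proof. by case=> n li Kj; exists n.+1, i, j. Qed.

Lemma picked_is_child_shift i j : picked_tree i -> pick_choice (x ++ i) j ->
  is_child (shift (rtree M w) x) i (i ++ j).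
Proof.
move=> Qi Kj; apply/is_child_shift; rewrite catA.
have [KM _ _] := picked_choiceP Qi.
apply: (@rtree_is_child _ _ _ _ B_nil M_Wset w (x ++ i) j); last exact: KM.
exact: picked_tree_sub Qi.
Qed.

Lemma picked_tree_closed i k : picked_tree i -> shift (rtree M w) x k ->
  pprefix k i -> picked_tree k.
Proof.
case=> n; elim: n i => [|n IH] i /=; first by move=> -> _ /pprefix_nil.
case=> i' [j [li Kj ->]] Sk ki.
have Qi' : picked_tree i' by exists n.
have [_ _ i'i hmid] := picked_is_child_shift Qi' Kj.
case: (pprefix_trichotomy ki i'i) => h.
- exact: IH li Sk h.
- by rewrite h.
- by case: (hmid k Sk h ki).
Qed.

Lemma picked_is_child i j : picked_tree i -> pick_choice (x ++ i) j ->
  is_child picked_tree i (i ++ j).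
Proof.
move=> Qi Kj; apply: (is_child_sub picked_tree_sub) => //.
  exact: picked_tree_step.
exact: picked_is_child_shift.
Qed.

Lemma Wset_picked_tree i : picked_tree i -> Wset picked_tree i = pick_choice (x ++ i).
Proof.
move=> Qi; apply/seteqP; split => j; last first.
  by move=> Kj; apply/(WsetP _ Qi); exact: picked_is_child.
move/(WsetP _ Qi) => ch; have [_ [[|m] lm] iij _] := ch.
  by move: iij; rewrite lm; case: i {Qi ch lm} => // /pprefix_irr.
case: lm => i' [j' [li' Kj' e]].
have ch' := picked_is_child (ex_intro _ m li') Kj'; rewrite -e in ch'.
by have ii' := is_child_uniq ch ch'; subst i'; rewrite (catIl e).
Qed.

Lemma picked_level_height n i : picked_level n i -> height picked_tree i = n.
Proof.
elim: n i => [|n IH] i /=; first by move=> ->; rewrite height_nil.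
case=> i' [j [li Kj ->]].
by rewrite (is_child_height (picked_is_child (ex_intro _ n li) Kj)) (IH _ li).
Qed.

Lemma finite_picked_level n : finite_set (picked_level n).
Proof.
elim: n => [|n IH] /=; first exact: finite_set1.
apply: (@sub_finite_set _ _
    (\bigcup_(i in picked_level n) cat i @` pick_choice (x ++ i))).
  by move=> v [i [j [li Kj ->]]]; exists i => //; exists j.
apply: bigcup_finite => // i li; apply: finite_image.
have Qi : picked_tree i by exists n.
have [KM _ _] := picked_choiceP Qi.
exact/(sub_finite_set KM)/finite_offspring/(rtree_sub B_nil M_Wset (picked_tree_good Qi).1).
Qed.

Lemma picked_tree_star : star_tree picked_tree.
Proof.
split; first by exists 0%N.
split => [i [[|m] /=]|n]; first by move=> ->.
  case=> i' [j [li Kj ->]] _.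
  have Qi' : picked_tree i' by exists m.
  have ch := picked_is_child Qi' Kj.
  exists i'; split; first by split => //; split; [case: ch|rewrite (is_child_height ch)].
  move=> j0 [Qj0 [pj0 hj0]].
  exact/(is_child_uniq ch)/(height_is_child Qj0 (picked_tree_step Qi' Kj) pj0).
apply: sub_finite_set (finite_picked_level n) => i [[m lm] hi].
by move: (picked_level_height lm); rewrite hi => ->.
Qed.

Lemma good_subtree : exists Q, star_subtree Q (shift (rtree M w) x) /\
  is_A_tree (Ashift Acoll x) Q.
Proof.
have tQ := picked_tree_star.
exists picked_tree; split; [split => //; split|split => // i Qi].
- exact: picked_tree_sub.
- by move=> i Qi k Sk ki; exact: picked_tree_closed Qi Sk ki.
- by rewrite /Ashift Wset_picked_tree //; have [] := picked_choiceP Qi.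
Qed.

End KoenigConstruction.

Lemma has_subtreeE w x : rtree M w x ->
  (exists Q, star_subtree Q (shift (rtree M w) x) /\ is_A_tree (Ashift Acoll x) Q)
  <-> forall n, good_to_depth n x w.
Proof.
move=> Sx; split; first by case=> Q [sQ aQ]; exact: subtree_good sQ aQ.
exact: good_subtree.
Qed.

End GoodEvents.

Local Open Scope ring_scope.

Section Independence.
Variables (A : finType) (R : realType) (d : measure_display)
  (Omega : measurableType d) (P : probability Omega R)
  (B : set (seq A)) (M : seq A -> Omega -> set (seq A)).
Notation word := (seq A).
Hypothesis sB : star_tree B.
Hypothesis M_Wset : forall x, B x -> forall w, M x w `<=` Wset B x.
Hypothesis M_meas : offspring_measurable B M.
Hypothesis M_indep : offspring_independent P B M.
Implicit Types (y : word) (U V T : seq word) (E F X : set Omega).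

Definition determined_by U E := forall w w',
  (forall y, y \in U -> M y w = M y w') -> E w -> E w'.

Lemma determined_by_sub U V E : {subset U <= V} ->
  determined_by U E -> determined_by V E.
Proof. by move=> s h w w' hw; apply: h => y /s; exact: hw. Qed.

Lemma determined_byI U V E F : determined_by U E -> determined_by V F ->
  determined_by (U ++ V) (E `&` F).
Proof.
move=> hE hF w w' hw [Ew Fw]; split.
  by apply: hE Ew => y yU; apply: hw; rewrite mem_cat yU.
by apply: hF Fw => y yV; apply: hw; rewrite mem_cat yV orbT.
Qed.

Lemma determined_byC U E : determined_by U E -> determined_by U (~` E).
Proof. by move=> h w w' hw nE E'; apply: nE; apply: h E' => y /hw ->. Qed.

Lemma determined_by_offspring y D : determined_by [:: y] [set w | M y w = D].
Proof. by move=> w w' hw /= <-; rewrite hw // mem_head. Qed.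

Lemma determined_by_nil E : determined_by [::] E -> E = set0 \/ E = setT.
Proof.
move=> h; have [[w0 Ew0]|ne] := pselect (exists w, E w).
  by right; apply/seteqP; split => // w _; exact: h Ew0.
by left; apply/seteqP; split => // w Ew; apply: ne; exists w.
Qed.

(* [E] with [M y] frozen to [D]: the result no longer depends on [M y]. *)
Definition fix_offspring y U E D : set Omega := [set w | exists w',
  [/\ M y w' = D, forall z, z \in U -> M z w' = M z w & E w']].

Lemma determined_by_fix_offspring y U E D :
  determined_by U (fix_offspring y U E D).
Proof.
move=> w1 w2 h12 [w' [e1 e2 e3]]; exists w'; split => // z zU.
by rewrite e2 // h12.
Qed.

Lemma fix_offspringE y U E D : determined_by (y :: U) E ->
  [set w | M y w = D] `&` E = [set w | M y w = D] `&` fix_offspring y U E D.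
Proof.
move=> h; apply/seteqP; split => w [/= eD Ew]; split => //; first by exists w.
case: Ew => w' [e1 e2 e3]; apply: h e3 => z.
by rewrite in_cons => /orP[/eqP ->|/e2 //]; rewrite e1 eD.
Qed.

Lemma determined_by_measurable U E : (forall y, y \in U -> B y) ->
  determined_by U E -> measurable E.
Proof.
elim: U E => [|y U IH] E hB hE; first by case: (determined_by_nil hE) => ->.
have By : B y by apply/hB/mem_head.
have -> : E = \bigcup_(s : seq word)
    ([set w | M y w = [set` s]] `&` fix_offspring y U E [set` s]).
  apply/seteqP; split => [w Ew|w [s _]]; last by rewrite -(fix_offspringE _ hE) => -[].
  have [s es] := (finite_seqP _).1 (finite_offspring sB M_Wset w By).
  by exists s => //; rewrite -(fix_offspringE _ hE).
apply: countable_bigcupT_measurable; first exact: countableP.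
move=> s; apply: measurableI; first exact: M_meas.
apply: IH; last exact: determined_by_fix_offspring.
by move=> z zU; apply: hB; rewrite in_cons zU orbT.
Qed.

Definition Wseq y : seq word := enum_fset (fset_set (Wset B y)).

Lemma Wseq_uniq y : uniq (Wseq y).
Proof. exact: fset_uniq. Qed.

Lemma set_Wseq y : [set` Wseq y] = Wset B y.
Proof.
by apply/seteqP; split => j /=; rewrite in_fset_set ?inE //; exact: finite_Wset.
Qed.

Lemma fine_measure_offspring_partition y X : B y -> measurable X ->
  fine (P X) = \sum_(D <- powerseq (Wseq y)) fine (P ([set w | M y w = D] `&` X)).
Proof.
move=> By mX.
have mD D : measurable ([set w | M y w = D] `&` X).
  by apply: measurableI => //; exact: M_meas.
rewrite sum_fine; last by move=> D _; exact: fin_num_measure.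
congr fine; rewrite fsbig_seq; last exact/powerseq_uniq/Wseq_uniq.
rewrite -measure_fin_bigcup //.
- congr (P _); apply/seteqP; split => [w Xw|w [D _ [_ Xw]] //].
  by exists (M y w) => //=; apply/mem_powerseq; rewrite set_Wseq; exact: M_Wset.
- by move=> D1 D2 _ _ [w [[/= <- _] [/= <- _]]].
Qed.

Definition atom T (c : word -> set word) : set Omega :=
  \big[setI/setT]_(y <- T) [set w | M y w = c y].

Lemma eq_atom T c c' : {in T, c =1 c'} -> atom T c = atom T c'.
Proof. by move=> h; apply: eq_big_seq => y yT; rewrite h. Qed.

Lemma atom1 y c : atom [:: y] c = [set w | M y w = c y].
Proof. by rewrite /atom big_seq1. Qed.

Lemma atom_cons y T c : atom (y :: T) c = [set w | M y w = c y] `&` atom T c.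
Proof. by rewrite /atom big_cons. Qed.

Lemma measurable_atom T c : (forall y, y \in T -> B y) -> measurable (atom T c).
Proof.
elim: T => [|y T IH] hB; first by rewrite /atom big_nil.
rewrite atom_cons; apply: measurableI; first exact/M_meas/hB/mem_head.
by apply: IH => z zT; apply: hB; rewrite in_cons zT orbT.
Qed.

Lemma atom_indep_uniq V : uniq V -> (forall y, y \in V -> B y) ->
  forall F, determined_by V F ->
  forall T c, uniq T -> (forall y, y \in T -> B y) -> (forall y, y \in T -> y \notin V) ->
  fine (P (atom T c `&` F)) = fine (P (atom T c)) * fine (P F).
Proof.
elim: V => [|v V IH] uV hBV F hF T c uT hBT disj.
  case: (determined_by_nil hF) => ->; first by rewrite setI0 measure0 mulr0.
  by rewrite setIT probability_setT mulr1.
move: uV => /= /andP[vV uV].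
have Bv : B v by apply/hBV/mem_head.
have hBV' : (forall y, y \in V -> B y) by move=> y yV; apply: hBV; rewrite in_cons yV orbT.
have vT : v \notin T by apply/negP => /disj; rewrite mem_head.
have mF := determined_by_measurable hBV hF.
rewrite (fine_measure_offspring_partition Bv); last first.
  by apply: measurableI => //; exact: measurable_atom.
rewrite [fine (P F)](fine_measure_offspring_partition Bv) // big_distrr /=.
apply: eq_big_seq => D _.
pose cD y := if y == v then D else c y.
have eT : atom T cD = atom T c.
  by apply: eq_atom => y yT; rewrite /cD; case: eqP => // yv; move: vT; rewrite -yv yT.
have hBvT : (forall y, y \in v :: T -> B y).
  by move=> y; rewrite in_cons => /orP[/eqP ->|]; [|apply: hBT].
have FvD := @determined_by_fix_offspring v V F D.
have -> : [set w | M v w = D] `&` (atom T c `&` F) =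
    atom (v :: T) cD `&` fix_offspring v V F D.
  by rewrite atom_cons /cD eqxx eT setICA (fix_offspringE _ hF) setICA setIA.
rewrite IH //; last first.
- move=> y; rewrite in_cons => /orP[/eqP -> //|/disj].
  by rewrite in_cons negb_or => /andP[].
- by rewrite /= vT.
have := IH uV hBV' _ FvD [:: v] (fun _ => D) erefl.
rewrite atom1 (fix_offspringE _ hF) => ->; last 2 first.
- by move=> y; rewrite mem_seq1 => /eqP ->.
- by move=> y; rewrite mem_seq1 => /eqP ->.
have -> : fine (P (atom (v :: T) cD)) =
    fine (P [set w | M v w = D]) * fine (P (atom T c)).
  by rewrite -eT /atom !M_indep ?big_cons ?/cD ?eqxx //= vT.
by rewrite mulrCA mulrA.
Qed.

Lemma atom_indep V F T c : (forall y, y \in V -> B y) -> determined_by V F ->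
  uniq T -> (forall y, y \in T -> B y) -> (forall y, y \in T -> y \notin V) ->
  fine (P (atom T c `&` F)) = fine (P (atom T c)) * fine (P F).
Proof.
move=> hBV hF uT hBT disj; apply: (@atom_indep_uniq (undup V)) => //.
- exact: undup_uniq.
- by move=> y; rewrite mem_undup; apply: hBV.
- by apply: determined_by_sub hF => y; rewrite mem_undup.
- by move=> y /disj; rewrite mem_undup.
Qed.

Lemma determined_indep_uniq U : uniq U -> (forall y, y \in U -> B y) ->
  forall V E F, (forall y, y \in V -> B y) -> (forall y, y \in U -> y \notin V) ->
  determined_by U E -> determined_by V F ->
  fine (P (E `&` F)) = fine (P E) * fine (P F).
Proof.
elim: U => [|u U IH] uU hBU V E F hBV disj hE hF.
  case: (determined_by_nil hE) => ->; first by rewrite set0I measure0 mul0r.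
  by rewrite setTI probability_setT mul1r.
move: uU => /= /andP[uU' uU].
have Bu : B u by apply/hBU/mem_head.
have hBU' y : y \in U -> B y by move=> yU; apply: hBU; rewrite in_cons yU orbT.
have mE := determined_by_measurable hBU hE.
have mF := determined_by_measurable hBV hF.
rewrite (fine_measure_offspring_partition Bu); last exact: measurableI.
rewrite [fine (P E)](fine_measure_offspring_partition Bu) // big_distrl /=.
apply: eq_big_seq => D _.
have EuD := @determined_by_fix_offspring u U E D.
have hu y : y \in [:: u] -> B y by rewrite mem_seq1 => /eqP ->.
rewrite setIA (fix_offspringE _ hE) -setIA -(atom1 u (fun _ => D)).
rewrite (@atom_indep (U ++ V)) //; first last.
- by move=> y; rewrite mem_seq1 => /eqP ->; rewrite mem_cat negb_or uU' disj ?mem_head.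
- exact: determined_byI EuD hF.
- by move=> y; rewrite mem_cat => /orP[]; [apply: hBU'|apply: hBV].
rewrite (IH uU hBU' V) //; last by move=> y yU; apply: disj; rewrite in_cons yU orbT.
rewrite (@atom_indep U) // ?mulrA // => y; rewrite mem_seq1 => /eqP -> //.
Qed.

Lemma determined_indep U V E F :
  (forall y, y \in U -> B y) -> (forall y, y \in V -> B y) ->
  (forall y, y \in U -> y \notin V) ->
  determined_by U E -> determined_by V F ->
  fine (P (E `&` F)) = fine (P E) * fine (P F).
Proof.
move=> hBU hBV disj hE hF; apply: (@determined_indep_uniq (undup U)) hBV _ _ hF => //.
- exact: undup_uniq.
- by move=> y; rewrite mem_undup; apply: hBU.
- by move=> y; rewrite mem_undup; apply: disj.
- by apply: determined_by_sub hE => y; rewrite mem_undup.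
Qed.

End Independence.

Lemma set_cons (T : eqType) (z : T) (s : seq T) : [set` z :: s] = z |` [set` s].
Proof.
apply/seteqP; split => k /=; first by rewrite in_cons => /orP[/eqP ->|ks]; [left|right].
by case=> [->|/= ks]; rewrite in_cons ?eqxx // ks orbT.
Qed.

Section Thinning.
Variables (R : realType) (T : choiceType).
Implicit Types (ds : seq T) (p : T -> R) (h : set T -> bool).

(* The probability that [h] holds of the random subset of [ds] that contains
   each [j] independently with probability [p j] (for [ds] duplicate-free). *)
Fixpoint thin_prob ds p h : R :=
  if ds is z :: ds' then
    p z * thin_prob ds' p (fun E => h (z |` E)) + (1 - p z) * thin_prob ds' p h
  else (h set0)%:R.

Lemma thin_prob1 ds p : thin_prob ds p (fun _ => true) = 1.
Proof. by elim: ds => [//|z ds IH] /=; rewrite IH !mulr1 addrC subrK. Qed.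

Lemma thin_prob_le_pred ds p h1 h2 : (forall j, j \in ds -> 0 <= p j <= 1) ->
  (forall E, E `<=` [set` ds] -> h1 E -> h2 E) ->
  thin_prob ds p h1 <= thin_prob ds p h2.
Proof.
elim: ds h1 h2 => [|z ds IH] h1 h2 hp hh /=.
  by case: (boolP (h1 set0)) => [/(hh _ (sub0set _)) ->|_] //; case: (h2 set0).
have /andP[p0 p1] := hp z (mem_head _ _).
have {}hp j : j \in ds -> 0 <= p j <= 1 by move=> jd; apply: hp; rewrite in_cons jd orbT.
rewrite set_cons in hh.
apply: lerD; apply: ler_wpM2l; rewrite ?subr_ge0 //; apply: IH => // E Eds; apply: hh.
  exact: setUS.
by move=> k /Eds; right.
Qed.

Lemma thin_prob_antitone ds p p' h :
  (forall j, j \in ds -> 0 <= p' j <= p j /\ p j <= 1) ->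
  (forall E E', E `<=` E' -> E' `<=` [set` ds] -> h E' -> h E) ->
  thin_prob ds p h <= thin_prob ds p' h.
Proof.
elim: ds h => [//|z ds IH] h hp hh /=.
have [/andP[p'0 p'p] p1] := hp z (mem_head _ _).
have {}hp j : j \in ds -> 0 <= p' j <= p j /\ p j <= 1.
  by move=> jd; apply: hp; rewrite in_cons jd orbT.
have hp1 j : j \in ds -> 0 <= p j <= 1.
  by move=> /hp [/andP[p'0j p'pj] pj1]; rewrite (le_trans p'0j p'pj).
rewrite set_cons in hh.
have F10 : thin_prob ds p (fun E => h (z |` E)) <= thin_prob ds p h.
  apply: thin_prob_le_pred => // E Eds; apply: hh; first exact: subsetUr.
  exact: setUS.
have IH1 : thin_prob ds p (fun E => h (z |` E)) <= thin_prob ds p' (fun E => h (z |` E)).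
  by apply: IH => // E E' EE' E'ds; apply: hh; apply: setUS.
have IH0 : thin_prob ds p h <= thin_prob ds p' h.
  apply: IH => // E E' EE' E'ds; apply: hh => //.
  by move=> k /E'ds; right.
nra.
Qed.

Lemma thin_prob_setI ds p (D : set T) h :
  thin_prob ds p (fun E => h (D `&` E)) = thin_prob [seq j <- ds | `[< D j >]] p h.
Proof.
elim: ds h => [|z ds IH] h /=; first by rewrite setI0.
case: (asboolP (D z)) => Dz /=.
  rewrite -IH -[in RHS]IH; congr (_ * thin_prob _ _ _ + _).
  by apply: funext => E; rewrite setIUr setI1 ifT //; exact/mem_set.
have -> : (fun E => h (D `&` (z |` E))) = (fun E => h (D `&` E)).
  by apply: funext => E; rewrite setIUr setI1 ifF ?set0U //; exact/memNset.
by rewrite IH -mulrDl addrC subrK mul1r.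
Qed.

(* The weight of [E] is the probability that the thinned set equals [E]. *)
Lemma thin_probE ws h (s : R) : uniq ws ->
  \sum_(E <- powerseq ws)
      ((1 - s) ^+ fcard E * s ^+ fcard ([set` ws] `\` E)) * (h E)%:R
  = thin_prob ws (fun _ => 1 - s) h.
Proof.
elim: ws h => [|z ws IH] h /=.
  move=> _; rewrite big_seq1 fcard0 setD0.
  have -> : [set` [::]] = set0 :> set T by apply/seteqP; split.
  by rewrite fcard0 !expr0 !mul1r.
move=> /andP[zws uws].
have nzE E : E \in powerseq ws -> ~ E z.
  by move=> /mem_powerseq Ews /Ews /= zin; rewrite zin in zws.
have fE E : E \in powerseq ws -> finite_set E.
  by move=> /mem_powerseq Ews; exact: sub_finite_set Ews (finite_seq _).
rewrite big_cat big_map /= set_cons addrC -!IH // !big_distrr /=.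
congr (_ + _); apply: eq_big_seq => E Es.
  have -> : (z |` [set` ws]) `\` (z |` E) = [set` ws] `\` E.
    apply/seteqP; split => k.
      by move=> [[->|kw] kE]; [case: kE; left|split => // kE'; apply: kE; right].
    move=> [kw kE]; split; first by right.
    by case=> // kz; move: kw; rewrite kz /= => zin; rewrite zin in zws.
  by rewrite fcardU1; [rewrite exprS; ring|exact: fE|exact: nzE].
have -> : (z |` [set` ws]) `\` E = z |` ([set` ws] `\` E).
  apply/seteqP; split => k; first by move=> [[->|kw] kE]; [left|right].
  by move=> [->|[kw kE]]; split; [left|exact: nzE|right|].
rewrite fcardU1; [by rewrite exprS; ring|exact: finite_setD|].
by move=> [/= zin _]; rewrite zin in zws.
Qed.

End Thinning.

Section IndependentThinning.
Variables (A : finType) (R : realType) (d : measure_display)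
  (Omega : measurableType d) (P : probability Omega R)
  (B : set (seq A)) (M : seq A -> Omega -> set (seq A)).
Notation word := (seq A).
Hypothesis sB : star_tree B.
Hypothesis M_Wset : forall x, B x -> forall w, M x w `<=` Wset B x.
Hypothesis M_meas : offspring_measurable B M.
Hypothesis M_indep : offspring_independent P B M.
Implicit Types (ds V : seq word) (X : word -> set Omega) (h : set word -> bool).

Definition occurring ds X (w : Omega) : set word := [set j | j \in ds /\ X j w].

Lemma occurring_nil X w : occurring [::] X w = set0.
Proof. by apply/seteqP; split => j // []. Qed.

Lemma occurring_consI z ds X (Z : set Omega) h :
  Z `&` [set w | h (occurring (z :: ds) X w)] `&` X z =
  Z `&` X z `&` [set w | h (z |` occurring ds X w)].
Proof.
suff oE w : X z w -> occurring (z :: ds) X w = z |` occurring ds X w.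
  apply/seteqP; split => w /=; first by move=> [[Zw hw] Xw]; rewrite -oE.
  by move=> [[Zw Xw] hw]; rewrite oE.
move=> Xz; apply/seteqP; split => j.
  by move=> [] /=; rewrite in_cons => /orP[/eqP ->|jd] Xj; [left|right].
by move=> [->|[jd Xj]]; split => //; rewrite in_cons ?eqxx ?jd ?orbT.
Qed.

Lemma occurring_consD z ds X (Z : set Omega) h :
  Z `&` [set w | h (occurring (z :: ds) X w)] `\` X z =
  Z `&` ~` X z `&` [set w | h (occurring ds X w)].
Proof.
suff oE w : ~ X z w -> occurring (z :: ds) X w = occurring ds X w.
  apply/seteqP; split => w /=; first by move=> [[Zw hw] nXw]; rewrite -oE.
  by move=> [[Zw nXw] hw]; rewrite oE.
move=> nXz; apply/seteqP; split => j.
  by move=> [] /=; rewrite in_cons => /orP[/eqP ->|jd] Xj.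
by move=> [jd Xj]; split; rewrite // in_cons jd orbT.
Qed.

Lemma determined_by_occurring ds X UX h :
  (forall j, j \in ds -> determined_by M (UX j) (X j)) ->
  determined_by M (flatten (map UX ds)) [set w | h (occurring ds X w)].
Proof.
move=> hX w w' hw /=.
suff -> : occurring ds X w' = occurring ds X w by [].
have hin j y : j \in ds -> y \in UX j -> y \in flatten (map UX ds).
  by move=> jd yU; apply/flattenP; exists (UX j) => //; apply: map_f.
apply/seteqP; split => j [jd Xj]; split => //.
  by apply: (hX j jd w' w) Xj => y yU; rewrite (hw y) // (hin j).
by apply: (hX j jd w w') Xj => y yU; rewrite (hw y) // (hin j).
Qed.

Let determined_measurable := determined_by_measurable sB M_Wset M_meas.

(* Events determined by pairwise disjoint sets of vertices are independent, so
   the set of those that occur is a thinning of [ds]. *)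
Lemma fine_measure_occurring ds X UX : uniq ds ->
  (forall j, j \in ds -> (forall y, y \in UX j -> B y) /\ determined_by M (UX j) (X j)) ->
  (forall j1 j2, j1 \in ds -> j2 \in ds -> j1 != j2 ->
     forall y, y \in UX j1 -> y \notin UX j2) ->
  forall V Z h, (forall y, y \in V -> B y) -> determined_by M V Z ->
  (forall j, j \in ds -> forall y, y \in UX j -> y \notin V) ->
  fine (P (Z `&` [set w | h (occurring ds X w)])) =
  fine (P Z) * thin_prob ds (fun j => fine (P (X j))) h.
Proof.
elim: ds => [|z ds IH] uds hX hdisj V Z h hBV hZ hZd /=.
  have -> : [set w | h (occurring [::] X w)] = if h set0 then setT else set0.
    by apply/seteqP; split => w; rewrite /= occurring_nil; case: (h set0).
  by case: (h set0); rewrite ?setIT ?setI0 ?measure0 /= ?mulr1 ?mulr0.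
move: uds => /= /andP[zds uds].
have [hBz hXz] := hX z (mem_head _ _).
have hX' j : j \in ds -> (forall y, y \in UX j -> B y) /\ determined_by M (UX j) (X j).
  by move=> jd; apply: hX; rewrite in_cons jd orbT.
have hdisj' j1 j2 : j1 \in ds -> j2 \in ds -> j1 != j2 ->
    forall y, y \in UX j1 -> y \notin UX j2.
  by move=> j1d j2d; apply: hdisj; rewrite in_cons ?j1d ?j2d orbT.
have mZ := determined_measurable hBV hZ.
have mXz := determined_measurable hBz hXz.
have hBVz y : y \in V ++ UX z -> B y.
  by rewrite mem_cat => /orP[]; [apply: hBV|apply: hBz].
have hZd' j : j \in ds -> forall y, y \in UX j -> y \notin V ++ UX z.
  move=> jd y yU; rewrite mem_cat negb_or (hZd j) ?in_cons ?jd ?orbT //=.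
  by apply: (hdisj j z); rewrite ?in_cons ?jd ?orbT ?eqxx //; apply: contraNneq zds => <-.
have VZz y : y \in V -> y \notin UX z.
  by move=> yV; apply: contraTN yV; exact: hZd (mem_head _ _) y.
set Y := Z `&` _.
have mY : measurable Y.
  apply: measurableI => //.
  apply: (determined_measurable (U := flatten (map UX (z :: ds)))).
    by move=> y /flattenP [s /mapP [j jd ->] yU]; exact: (hX j jd).1 y yU.
  by apply: determined_by_occurring => j /hX [].
rewrite (measureDI P mY mXz) fineD; last 2 first.
- by apply: fin_num_measure; exact: measurableD.
- by apply: fin_num_measure; exact: measurableI.
rewrite /Y occurring_consI occurring_consD.
rewrite (IH uds hX' hdisj' (V ++ UX z) (Z `&` X z) (fun E => h (z |` E))) //; last first.
  exact: determined_byI.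
rewrite (IH uds hX' hdisj' (V ++ UX z) (Z `&` ~` X z)) //; last first.
  exact: determined_byI hZ (determined_byC hXz).
have indepZ := determined_indep sB M_Wset M_meas M_indep hBV hBz VZz hZ.
rewrite (indepZ _ hXz) (indepZ _ (determined_byC hXz)).
rewrite probability_setC // fineB //=; last exact: fin_num_measure.
by ring.
Qed.

End IndependentThinning.

Section Bound.
Variables (A : finType) (R : realType) (d : measure_display)
  (Omega : measurableType d) (P : probability Omega R)
  (B : set (seq A)) (M : seq A -> Omega -> set (seq A))
  (Acoll : seq A -> set (set (seq A))).
Notation word := (seq A).
Notation Bp := (Bprime P B M).
Notation Sev y := [set w | rtree M w y].
Notation good := (good_to_depth M Acoll).
Hypothesis sB : star_tree B.
Hypothesis M_Wset : forall x, B x -> forall w, M x w `<=` Wset B x.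
Hypothesis M_meas : offspring_measurable B M.
Hypothesis M_indep : offspring_independent P B M.
Implicit Types (a b j k x y z : word) (X Y : set Omega).

Let B_nil : B [::] := sB.1.
Let determined_measurable := determined_by_measurable sB M_Wset M_meas.
Let determined_independent := determined_indep sB M_Wset M_meas M_indep.

Definition generations n y :=
  [set z | B z /\ prefix y z /\ (height B z < height B y + n)%N].

Lemma finite_generations n y : finite_set (generations n y).
Proof.
apply: (@sub_finite_set _ _ (\bigcup_(k in `I_(height B y + n)) level B k)).
  by move=> z [Bz [_ hz]]; exists (height B z).
by apply: bigcup_finite; [exact: finite_II|move=> k _; case: sB => _ []].
Qed.

Definition generations_seq n y : seq word := enum_fset (fset_set (generations n y)).

Lemma mem_generations_seq n y z : z \in generations_seq n y <-> generations n y z.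
Proof.
rewrite -[z \in enum_fset _]/(z \in fset_set (generations n y)).
by rewrite in_fset_set ?inE //; exact: finite_generations.
Qed.

Definition ancestors_seq y : seq word := enum_fset (fset_set (ancestors B y)).

Lemma mem_ancestors_seq y z : z \in ancestors_seq y <-> ancestors B y z.
Proof.
rewrite -[z \in enum_fset _]/(z \in fset_set (ancestors B y)).
by rewrite in_fset_set ?inE //; exact: finite_ancestors.
Qed.

Lemma generations_seq_sub n y z : z \in generations_seq n y -> B z.
Proof. by case/mem_generations_seq. Qed.

Lemma ancestors_seq_sub y z : z \in ancestors_seq y -> B z.
Proof. by case/mem_ancestors_seq. Qed.

Lemma determined_by_good n y : B y ->
  determined_by M (generations_seq n y) (good n y).
Proof.
elim: n y => [//|n IH] y By w w' hw /= [K [KM AK HK]].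
have ey : M y w = M y w'.
  apply/hw/mem_generations_seq; split => //; split; first exact: prefix_refl.
  by rewrite addnS ltnS leq_addr.
exists K; split => [|//|j Kj]; first by rewrite -ey.
have [Byj hyj] := M_Wset By (KM _ Kj).
apply: (IH _ Byj w) (HK j Kj) => z /mem_generations_seq [Bz [pz hz]].
apply/hw/mem_generations_seq; split => //; split.
  exact: prefix_trans (prefix_prefix y j) pz.
by move: hz; rewrite hyj addSn addnS.
Qed.

Lemma determined_by_rtree y : determined_by M (ancestors_seq y) (Sev y).
Proof.
move=> w w' hw /rtreeP [n]; elim: n y hw => [|n IH] y hw /=.
  by move=> ->; exact: rtree_nil.
case=> a [j [la [Mj ey]]]; subst y.
have Sa : rtree M w a by apply/rtreeP; exists n.
have [Ba _ ab _] := rtree_is_childB B_nil M_Wset Sa Mj.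
have Sa' : rtree M w' a.
  apply: IH la => z /mem_ancestors_seq [Bz za]; apply/hw/mem_ancestors_seq.
  by split => //; exact: pprefix_trans za ab.
by apply: rtree_child Sa' _; rewrite -hw //; apply/mem_ancestors_seq.
Qed.

Lemma measurable_rtree y : measurable (Sev y).
Proof. exact: determined_measurable (@ancestors_seq_sub y) (@determined_by_rtree y). Qed.

Lemma measurable_good n y : B y -> measurable (good n y).
Proof.
move=> By; apply: determined_measurable (@generations_seq_sub n y) _.
exact: determined_by_good.
Qed.

Lemma fine_measureK X : measurable X -> P X = (fine (P X))%:E.
Proof. by move=> mX; rewrite fineK //; exact: fin_num_measure. Qed.

Lemma fine_measure_ge0 X : 0 <= fine (P X).
Proof. exact/fine_ge0/measure_ge0. Qed.

Lemma fine_measure_le1 X : measurable X -> fine (P X) <= 1.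
Proof. by move=> mX; have := probability_le1 P mX; rewrite (fine_measureK mX) lee_fin. Qed.

Lemma le_fine_measure X Y : measurable X -> measurable Y -> X `<=` Y ->
  fine (P X) <= fine (P Y).
Proof.
move=> mX mY XY; apply: fine_le; [exact: fin_num_measure|exact: fin_num_measure|].
exact: le_measure (mem_set mX) (mem_set mY) XY.
Qed.

Lemma Bprime_sub y : Bp y -> B y.
Proof. by case. Qed.

Lemma Bprime_pos y : Bp y -> 0 < fine (P (Sev y)).
Proof. by move=> [_]; rewrite (fine_measureK (measurable_rtree y)) lte_fin. Qed.

Lemma Bprime_nil : Bp [::].
Proof.
split => //; rewrite (_ : Sev [::] = setT) ?probability_setT ?lte01 //.
by apply/seteqP; split => // w _; exact: rtree_nil.
Qed.

Lemma Bprime_prefix_closed z k : Bp z -> B k -> pprefix k z -> Bp k.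
Proof.
move=> Bz Bk kz; split => //; rewrite (fine_measureK (measurable_rtree k)) lte_fin.
apply: lt_le_trans (Bprime_pos Bz) _; apply: le_fine_measure; try exact: measurable_rtree.
by move=> w Sz; exact: (@rtree_prefix_closed _ _ _ _ B_nil M_Wset w z k Sz Bk kz).
Qed.

Lemma height_Bprime z : Bp z -> height Bp z = height B z.
Proof.
move=> Bz; rewrite !heightE; congr fcard; apply/seteqP; split => k [Bk kz].
  by split => //; exact: Bprime_sub.
by split => //; exact: Bprime_prefix_closed Bz Bk kz.
Qed.

Lemma Wset_Bprime y D : Bp y -> D `<=` Wset B y ->
  0 < fine (P [set w | M y w = D]) -> D `<=` Wset Bp y.
Proof.
move=> By DW pos j Dj; have [Byj hyj] := DW _ Dj.
suff Bpj : Bp (y ++ j) by split => //; rewrite !height_Bprime.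
split => //; rewrite (fine_measureK (measurable_rtree _)) lte_fin.
have yNanc : y \notin ancestors_seq y by apply/negP => /mem_ancestors_seq [_ /pprefix_irr].
have e : fine (P (Sev y `&` [set w | M y w = D])) =
    fine (P (Sev y)) * fine (P [set w | M y w = D]).
  apply: (determined_independent (V := [:: y]) (@ancestors_seq_sub y) _ _
    (@determined_by_rtree y) (determined_by_offspring (M := M) (y := y) (D := D))).
    by move=> z; rewrite mem_seq1 => /eqP ->; exact: Bprime_sub.
  by move=> z zA; rewrite mem_seq1; apply: contraTneq zA => ->.
apply: (@lt_le_trans _ _ (fine (P (Sev y `&` [set w | M y w = D])))).
  by rewrite e; apply: mulr_gt0 => //; exact: Bprime_pos.
apply: le_fine_measure => [||w [/= Sy My]].
- exact: measurableI (measurable_rtree y) (M_meas (Bprime_sub By) D).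
- exact: measurable_rtree.
- by apply: rtree_child Sy _; rewrite My.
Qed.

Lemma Wset_Bprime_sub y : Bp y -> Wset Bp y `<=` Wset B y.
Proof.
move=> By j [Byj hyj]; split; first exact: Bprime_sub.
by rewrite -!height_Bprime.
Qed.

Definition weight y s (E : set word) : R :=
  (1 - s) ^+ fcard E * s ^+ fcard (Wset B y `\` E).

Lemma weight_ge0 y s E : 0 <= s <= 1 -> 0 <= weight y s E.
Proof. by case/andP => s0 s1; rewrite /weight mulr_ge0 ?exprn_ge0 ?subr_ge0. Qed.

Lemma weight_sumE y s (h : set word -> bool) :
  \sum_(E <- powerseq (Wseq B y)) weight y s E * (h E)%:R =
  thin_prob (Wseq B y) (fun=> 1 - s) h.
Proof. by rewrite -thin_probE ?(set_Wseq sB y) //; exact: Wseq_uniq. Qed.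

Lemma thinned_miss_probE y s : thinned_miss_prob P B M Acoll y s =
  \sum_(D <- powerseq (Wseq B y)) fine (P [set w | M y w = D]) *
    \sum_(E <- powerseq (Wseq B y)) weight y s E * \1_(~` Acoll y) (D `&` E).
Proof.
have us := powerseq_uniq (Wseq_uniq B y).
rewrite /thinned_miss_prob /=.
have -> : [set D | D `<=` Wset B y] = [set` powerseq (Wseq B y)].
  by apply/seteqP; split => D /=; rewrite mem_powerseq (set_Wseq sB y).
rewrite -fsbig_seq //.
apply: eq_bigr => D _; rewrite -fsbig_seq // big_distrr /=.
by apply: eq_bigr => E _; rewrite /weight -mulrA.
Qed.

Lemma thinned_miss_prob_le1 y s : 0 <= s <= 1 -> B y ->
  thinned_miss_prob P B M Acoll y s <= 1.
Proof.
move=> s01 By; rewrite thinned_miss_probE.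
apply: (@le_trans _ _ (\sum_(D <- powerseq (Wseq B y)) fine (P [set w | M y w = D]))).
  apply: ler_sum => D _; rewrite -[leRHS]mulr1.
  apply: ler_wpM2l; first exact: fine_measure_ge0.
  rewrite -(thin_prob1 (Wseq B y) (fun=> 1 - s)) -weight_sumE.
  apply: ler_sum => E _; apply: ler_wpM2l; first exact: weight_ge0.
  by rewrite indicE; case: (_ \in _).
rewrite -[leRHS]/(fine 1%:E) -(probability_setT P).
rewrite (fine_measure_offspring_partition P sB M_Wset M_meas By) //.
by under [leRHS]eq_bigr do rewrite setIT.
Qed.

Lemma thinned_miss_prob_le_gA y s : 0 <= s <= 1 -> Bp y ->
  thinned_miss_prob P B M Acoll y s <= gA P B M Acoll s.
Proof.
move=> s01 By; apply: sup_upper_bound; last by exists y.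
split; first by exists (thinned_miss_prob P B M Acoll [::] s), [::]; [exact: Bprime_nil|].
by exists 1 => v [x Bx <-]; exact/thinned_miss_prob_le1/Bprime_sub.
Qed.

Lemma eq_of_prefix_height a b : B a -> B b -> height B a = height B b ->
  prefix a b -> a = b.
Proof.
move=> Ba Bb hab pab; case: (ltngtP (size a) (size b)) => hs.
- by have := height_lt Ba (introT andP (conj pab hs)); rewrite hab ltnn.
- by move: (size_prefix pab); rewrite leqNgt hs.
- exact: prefix_size_eq.
Qed.

Lemma generations_children_disjoint n y j1 j2 : Wset B y j1 -> Wset B y j2 ->
  j1 != j2 -> forall z, z \in generations_seq n (y ++ j1) ->
  z \notin generations_seq n (y ++ j2).
Proof.
move=> [B1 h1] [B2 h2] j12 z /mem_generations_seq [_ [p1 _]].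
apply/negP => /mem_generations_seq [_ [p2 _]].
have h12 : height B (y ++ j1) = height B (y ++ j2) by rewrite h1 h2.
case: (prefix_total p1 p2) => hp; move: j12.
  by rewrite (catIl (eq_of_prefix_height B1 B2 h12 hp)) eqxx.
by rewrite (catIl (eq_of_prefix_height B2 B1 (esym h12) hp)) eqxx.
Qed.

Lemma parent_notin_generations n y j : B y -> Wset B y j ->
  y \notin generations_seq n (y ++ j).
Proof.
move=> By /(WsetP _ By) [_ _ /pprefix_size + _].
by apply: contraTN => /mem_generations_seq [_ [/size_prefix]]; rewrite leqNgt => ->.
Qed.

Hypothesis A_mono : forall x, Bp x -> monotonic (Acoll x) (Wset Bp x).

Lemma filter_WseqE y (D : set word) : D `<=` Wset B y ->
  [set` [seq j <- Wseq B y | `[< D j >]]] = D.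
Proof.
move=> DW; apply/seteqP; split => j /=; rewrite mem_filter; first by case/andP => /asboolP.
by move=> Dj; rewrite (asboolT Dj) /=; have := DW _ Dj; rewrite -(set_Wseq sB y).
Qed.

(* Monotonicity of [Acoll y] lets one take for [K] all children that are good
   to depth [n]. *)
Lemma not_good_offspringE n y D : Bp y -> D `<=` Wset Bp y ->
  [set w | M y w = D] `&` ~` good n.+1 y =
  [set w | M y w = D] `&` [set w | occurring [seq j <- Wseq B y | `[< D j >]]
                                    (fun j => good n (y ++ j)) w \in ~` Acoll y].
Proof.
move=> By DW'; set ds := [seq j <- _ | _].
have dsD : [set` ds] = D by apply: filter_WseqE; exact: subset_trans DW' (Wset_Bprime_sub By).
apply/seteqP; split => w [/= eD nG]; split => //.
  apply/mem_set => hA; apply: nG.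
  exists (occurring ds (fun j => good n (y ++ j)) w); split => //.
    by move=> j [jd _]; rewrite eD -dsD.
  by move=> j [].
move=> [K [KM AK HK]]; move: nG => /set_mem; apply.
apply: (A_mono By AK).
  by move=> j Kj; split; [have := KM _ Kj; rewrite eD -dsD|exact: HK].
by move=> j [jd _]; apply: DW'; rewrite -dsD.
Qed.

Variable s0 : R.
Hypothesis s0_01 : 0 <= s0 <= 1.

Lemma miss_good_offspring_le n y D : Bp y -> D `<=` Wset B y ->
  (forall j, Bp (y ++ j) -> fine (P (~` good n (y ++ j))) <= s0) ->
  fine (P ([set w | M y w = D] `&` ~` good n.+1 y)) <=
  fine (P [set w | M y w = D]) *
    \sum_(E <- powerseq (Wseq B y)) weight y s0 E * \1_(~` Acoll y) (D `&` E).
Proof.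
move=> By DW IH; have By' := Bprime_sub By.
have mD : measurable [set w | M y w = D] by exact: M_meas.
have := fine_measure_ge0 [set w | M y w = D]; rewrite le_eqVlt => /orP[/eqP D0|Dpos].
  rewrite -D0 mul0r [leRHS]D0; apply: le_fine_measure => //.
  by apply: measurableI => //; apply/measurableC/measurable_good.
have DW' := Wset_Bprime By DW Dpos.
rewrite not_good_offspringE //; set ds := [seq j <- _ | _].
have dsD : [set` ds] = D := filter_WseqE DW.
have dsW j : j \in ds -> Wset B y j by move=> jd; apply: DW; rewrite -dsD.
rewrite (fine_measure_occurring sB M_Wset M_meas M_indep
  (UX := fun j => generations_seq n (y ++ j)) _ _ _ (V := [:: y])); first last.
- move=> j /dsW jW z zU; rewrite mem_seq1; apply: contraTneq zU => ->.
  exact: parent_notin_generations.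
- exact: determined_by_offspring.
- by move=> z; rewrite mem_seq1 => /eqP ->.
- by move=> j1 j2 /dsW j1W /dsW j2W; exact: generations_children_disjoint.
- move=> j /dsW [Byj _]; split; [exact: generations_seq_sub|exact: determined_by_good].
- exact/filter_uniq/Wseq_uniq.
apply: ler_wpM2l; first exact: fine_measure_ge0.
under eq_bigr do rewrite indicE.
rewrite weight_sumE (thin_prob_setI _ _ D (fun K => K \in ~` Acoll y)).
apply: thin_prob_antitone => [j jd|E E' EE' E'ds]; last first.
  move=> /set_mem nA; apply/mem_set => hA; apply: nA.
  by apply: (A_mono By hA) => // j /E'ds; rewrite dsD => /DW'.
have Dj : D j by rewrite -dsD.
have [Bpj _] := DW' j Dj.
have mG := measurable_good n (Bprime_sub Bpj).
have := IH _ Bpj; rewrite probability_setC ?fineB //=; last exact: fin_num_measure.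
have := fine_measure_le1 mG.
by case/andP: s0_01 => ? ? ? ?; split => //; apply/andP; split; lra.
Qed.

Hypothesis gA_le : gA P B M Acoll s0 <= s0.

Lemma miss_good_le n y : Bp y -> fine (P (~` good n y)) <= s0.
Proof.
elim: n y => [|n IH] y By; first by rewrite setCT measure0; case/andP: s0_01.
have mGc : measurable (~` good n.+1 y) by exact/measurableC/measurable_good/Bprime_sub.
rewrite (fine_measure_offspring_partition P sB M_Wset M_meas (Bprime_sub By) mGc).
apply: le_trans gA_le; apply: le_trans (thinned_miss_prob_le_gA s0_01 By).
rewrite thinned_miss_probE big_seq [leRHS]big_seq; apply: ler_sum => D.
move=> /mem_powerseq; rewrite (set_Wseq sB) => DW.
exact: miss_good_offspring_le By DW (fun j => IH (y ++ j)).
Qed.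

Lemma cond_no_subtree_le x : Bp x -> cond_no_subtree P M Acoll x <= s0.
Proof.
move=> Bx; have Bx' := Bprime_sub Bx.
pose F n := Sev x `&` ~` good n x.
have mF n : measurable (F n).
  by apply: measurableI; [exact: measurable_rtree|exact/measurableC/measurable_good].
rewrite /cond_no_subtree.
have -> : no_subtree_event M Acoll x `&` Sev x = \bigcup_n F n.
  apply/seteqP; split => w.
    move=> [noQ Sw]; apply: contrapT => hno; apply: noQ.
    apply/(has_subtreeE Acoll sB M_Wset Sw) => n.
    by apply: contrapT => nG; apply: hno; exists n.
  by move=> [n _ [Sw nG]]; split => // /(has_subtreeE Acoll sB M_Wset Sw) G; exact/nG/G.
have mU : measurable (\bigcup_n F n) by exact: bigcupT_measurable.
have ndF : nondecreasing_seq F.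
  move=> n m nm; apply/subsetPset => w [Sw nG]; split => // Gm.
  exact/nG/(good_to_depth_le nm Gm).
have le : (P (\bigcup_n F n) <= (fine (P (Sev x)) * s0)%:E)%E.
  have cvF := @nondecreasing_cvg_mu _ _ R P F mF mU ndF.
  rewrite -(cvg_lim _ cvF) //; apply: lime_le.
    by apply/cvg_ex; exists (P (\bigcup_n F n)).
  apply: nearW => n /=; rewrite (fine_measureK (mF n)) lee_fin /F.
  rewrite (determined_independent (@ancestors_seq_sub x) (@generations_seq_sub n x) _
    (@determined_by_rtree x) (determined_byC (@determined_by_good n x Bx'))).
    by apply: ler_wpM2l; [exact: fine_measure_ge0|exact: miss_good_le].
  move=> z /mem_ancestors_seq [_ zx]; apply/negP => /mem_generations_seq [_ [xz _]].
  by have := pprefix_size zx; rewrite ltnNge (size_prefix xz).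
rewrite ler_pdivrMr ?Bprime_pos // mulrC.
by move: le; rewrite (fine_measureK mU) lee_fin.
Qed.

End Bound.

Theorem theorem5p17 (A : finType) (R : realType) (d : measure_display)
  (Omega : measurableType d) (P : probability Omega R)
  (B : set (seq A)) (M : seq A -> Omega -> set (seq A))
  (Acoll : seq A -> set (set (seq A))) (s0 : R) :
  star_tree B ->
  (forall x, B x -> forall w, M x w `<=` Wset B x) ->
  offspring_measurable B M ->
  offspring_independent P B M ->
  bounded_offspring P B M ->
  (forall x, Bprime P B M x ->
     Acoll x !=set0 /\
     (forall X, Acoll x X -> X `<=` Wset (Bprime P B M) x) /\
     monotonic (Acoll x) (Wset (Bprime P B M) x)) ->
  0 <= s0 <= 1 ->
  gA P B M Acoll s0 = s0 ->
  (forall t, 0 <= t <= 1 -> gA P B M Acoll t = t -> s0 <= t) ->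
  sup [set cond_no_subtree P M Acoll x | x in Bprime P B M] <= s0.
Proof.
move=> sB M_Wset M_meas M_indep _ HA s0_01 gA_s0 _.
have A_mono x : Bprime P B M x -> monotonic (Acoll x) (Wset (Bprime P B M) x).
  by case/HA => _ [].
apply: ge_sup; first by exists (cond_no_subtree P M Acoll [::]), [::]; [exact: Bprime_nil|].
move=> _ [x Bx <-].
by apply: (cond_no_subtree_le sB M_Wset M_meas M_indep A_mono s0_01) => //; rewrite gA_s0.
Qed.
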